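(* Let $x\neq0$ with $r(x)\neq0$, let $p\neq0$, and let $S=[s^{(1)},\dots,s^{(k)}]\in\mathbb C^{n\times k}$ satisfy $p^{\mathrm H}r(x)\neq0$ and $S^{\mathrm H}r(x)=0$. Suppose $[x,\ p,\ S]$ has full column rank, and that $(\alpha_{\mathrm{opt}},b_{\mathrm{opt}})$ is a stationary point of the function $(\alpha,b)\mapsto\rho\big(x+\alpha(I-P_{x,\rho(x_{\mathrm{opt}}),\rho(x)})[p+Sb]\big)$, where $$s=p+Sb_{\mathrm{opt}},\quad d=\alpha_{\mathrm{opt}}(I-P_{x,\rho(x_{\mathrm{opt}}),\rho(x)})s,\quad x_{\mathrm{opt}}=x+d.$$ Write $r_{\mathrm{opt}}=r(x_{\mathrm{opt}})$ and $\check F:=\check F_{\rho(x_{\mathrm{opt}}),\rho(x)}(\rho(x_{\mathrm{opt}});x)$. Then, in the nontrivial case $x_{\mathrm{opt}}\neq x$, and provided $x^{\mathrm H}\Phi(\rho(x_{\mathrm{opt}}),\rho(x))x\neq0$ and $s^{\mathrm H}\check Fs\neq0$: $\alpha_{\mathrm{opt}}\neq0$, $r_{\mathrm{opt}}\perp\mathrm{span}\{x,p,S,s,d\}$, and $$\alpha_{\mathrm{opt}}=-\frac{p^{\mathrm H}r(x)}{s^{\mathrm H}\check Fs}=-\frac{d^{\mathrm H}F(\rho(x_{\mathrm{opt}}))d}{r(x)^{\mathrm H}p},$$ $$\rho(x_{\mathrm{opt}})-\rho(x)=\frac{|r(x)^{\mathrm H}p|^2}{[x^{\mathrm H}\Phi(\rho(x_{\mathrm{opt}}),\rho(x))x][s^{\mathrm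 H}\check Fs]}=\frac{d^{\mathrm H}F(\rho(x_{\mathrm{opt}}))d}{x^{\mathrm H}\Phi(\rho(x_{\mathrm{opt}}),\rho(x))x},$$ $$r(x_{\mathrm{opt}})-r(x)=\check Fd,$$ $$b_{\mathrm{opt}}=-\big[S^{\mathrm H}\check FS\big]^{\dagger}S^{\mathrm H}\check Fp+v,$$ where $v$ is a vector satisfying $\check FSv\perp\mathrm{span}\{x,p,S,s,d\}$ and $\dagger$ denotes the Moore–Penrose inverse. Moreover, the four displayed formulas also hold in the trivial case $\alpha_{\mathrm{opt}}=0$, $d=0$, $x_{\mathrm{opt}}=x$, $\rho(x_{\mathrm{opt}})=\rho(x)$, $r(x_{\mathrm{opt}})=r(x)$.
   Context: Setting: $F(\lambda)=\sum_{k=0}^m A_k\lambda^{m-k}$ with Hermitian $A_k\in\mathbb C^{n\times n}$; $\mathcal I=(\lambda_-,\lambda_+)$ with $F(\lambda_-)$ negative definite. For $x$ such that $x^{\mathrm H}F(\lambda)x=0$ has a root in $\mathcal I$, it is assumed $\sigma(x):=x^{\mathrm H}F'(\rho(x))x>0$, so the root is unique and denoted $\rho(x)$ (Rayleigh quotient); all vectors at which $\rho$ is evaluated are assumed to be of this type. Residual: $r(x)=F(\rho(x))x$ (so $x^{\mathrm H}r(x)=0$ and $r(x)=-\tfrac12\sigma(x)\nabla\rho(x)$). Divided difference: $\Phi(\rho_1,\rho_2)=\frac{F(\rho_1)-F(\rho_2)}{\rho_1-\rho_2}$. Oblique projection: $P_{x,\rho_1,\rho_2}=\frac{xx^{\mathrm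 H}\Phi(\rho_1,\rho_2)}{x^{\mathrm H}\Phi(\rho_1,\rho_2)x}$. Projected polynomial: $\check F_{\rho_1,\rho_2}(\rho;x)=(I-P_{x,\rho_1,\rho_2}^{\mathrm H})F(\rho)(I-P_{x,\rho_1,\rho_2})$. *)

From HB Require Import structures.
From mathcomp Require Import all_boot all_order all_algebra.
From mathcomp Require Import complex.
From mathcomp Require Import all_classical all_reals all_analysis.
From Stdlib Require Import ClassicalEpsilon.

Set Implicit Arguments.
Unset Strict Implicit.
Unset Printing Implicit Defensive.

Import Order.TTheory GRing.Theory Num.Theory.
Import numFieldNormedType.Exports.
Local Open Scope ring_scope.
Local Open Scope complex_scope.

Section Defs.
Variable R : realType.
Local Notation C := R[i].

Definition hc p q (M : 'M[C]_(p, q)) : 'M[C]_(q, p) := (map_mx conjc M)^T.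

Definition ip n (u v : 'cV[C]_n) : C := (hc u *m v) 0 0.
Definition qf n (M : 'M[C]_n) (y : 'cV[C]_n) : C := (hc y *m M *m y) 0 0.

Variables (n m : nat) (A : 'I_m.+1 -> 'M[C]_n).

Definition Fpoly (lam : R) : 'M[C]_n :=
  \sum_(k < m.+1) ((lam ^+ (m - k))%:C) *: A k.

Definition dFpoly (lam : R) : 'M[C]_n :=
  \sum_(k < m.+1) ((((m - k)%:R * lam ^+ (m - k).-1) : R)%:C) *: A k.

(** Divided difference Phi(r1,r2); for r1 = r2 the (limit) value F'(r1). *)
Definition Phi (r1 r2 : R) : 'M[C]_n :=
  if r1 == r2 then dFpoly r1 else ((r1 - r2)^-1)%:C *: (Fpoly r1 - Fpoly r2).

Definition inI (lm : R) (lp : \bar R) (lam : R) : Prop :=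
  lm < lam /\ (lam%:E < lp)%E.

(** Rayleigh functional rho(y): the root of y^H F(lam) y = 0 in I
    (chosen by Hilbert's epsilon; it is unique under the standing assumptions). *)
Definition rho (lm : R) (lp : \bar R) (y : 'cV[C]_n) : R :=
  epsilon (inhabits 0) (fun lam => inI lm lp lam /\ qf (Fpoly lam) y = 0).

Definition resid lm lp (y : 'cV[C]_n) : 'cV[C]_n := Fpoly (rho lm lp y) *m y.

Definition Proj (x : 'cV[C]_n) (r1 r2 : R) : 'M[C]_n :=
  (qf (Phi r1 r2) x)^-1 *: (x *m hc x *m Phi r1 r2).

Definition Fcheck (r1 r2 lam : R) (x : 'cV[C]_n) : 'M[C]_n :=
  (1%:M - hc (Proj x r1 r2)) *m Fpoly lam *m (1%:M - Proj x r1 r2).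

End Defs.

Definition orth_span (R : realType) n k (x p : 'cV[R[i]]_n) (S : 'M[R[i]]_(n, k))
    (s d w : 'cV[R[i]]_n) : Prop :=
  [/\ ip x w = 0, ip p w = 0, hc S *m w = 0, ip s w = 0 & ip d w = 0].

Definition MPinverse (R : realType) k (M X : 'M[R[i]]_k) : Prop :=
  [/\ M *m X *m M = M, X *m M *m X = X,
      hc (M *m X) = M *m X & hc (X *m M) = X *m M].

Definition stationary (R : realType) k (f : R[i] -> 'cV[R[i]]_k -> R)
    (a0 : R[i]) (b0 : 'cV[R[i]]_k) : Prop :=
  forall (da : R[i]) (db : 'cV[R[i]]_k),
    is_derive (0 : R) (1 : R)
      (fun t : R => f (a0 + t%:C * da) (b0 + t%:C *: db)) 0.

(* Along a line y(t) through x_opt on which rho is stationary, differentiating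
   y(t)^H F(rho(y(t))) y(t) = 0 leaves only the y-derivative: Re (r_opt^H y'(0)) = 0.
   Moving alpha gives r_opt _|_ (I - P) s, moving b gives S^H r_opt = 0 (alpha <> 0,
   since s^H r(x) = p^H r(x) <> 0).  As (I - P)^H fixes the vectors orthogonal to x
   and F(mu) - F(rho(x)) = (mu - rho(x)) Phi, the residuals differ by
   r_opt - r(x) = Fcheck d; testing this against (I - P) s and d gives the formulas
   for alpha and mu - rho(x), and b solves S^H Fcheck S b = - S^H Fcheck p. *)

From HB Require Import structures.
From mathcomp Require Import all_boot all_order all_algebra.
From mathcomp Require Import complex.
From mathcomp Require Import all_classical all_reals all_analysis.
From mathcomp Require Import ring.
From Stdlib Require Import ClassicalEpsilon.

Set Implicit Arguments.
Unset Strict Implicit.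
Unset Printing Implicit Defensive.

Import Order.TTheory GRing.Theory Num.Theory.
Local Open Scope ring_scope.
Local Open Scope complex_scope.

Section ConjugateTranspose.
Variable R : realType.
Local Notation C := R[i].

Lemma hcD p q (M N : 'M[C]_(p, q)) : hc (M + N) = hc M + hc N.
Proof. by rewrite /hc raddfD linearD. Qed.

Lemma hcB p q (M N : 'M[C]_(p, q)) : hc (M - N) = hc M - hc N.
Proof. by rewrite /hc raddfB linearB. Qed.

Lemma hcZ p q (c : C) (M : 'M[C]_(p, q)) : hc (c *: M) = conjc c *: hc M.
Proof. by rewrite /hc map_mxZ linearZ. Qed.

Lemma hcM p q r (M : 'M[C]_(p, q)) (N : 'M[C]_(q, r)) : hc (M *m N) = hc N *m hc M.
Proof. by rewrite /hc map_mxM trmx_mul. Qed.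

Lemma hcK p q (M : 'M[C]_(p, q)) : hc (hc M) = M.
Proof. by rewrite /hc map_trmx trmxK -map_mx_comp map_mx_id // => z; apply: conjcK. Qed.

Lemma hc1 p : hc (1%:M : 'M[C]_p) = 1%:M.
Proof. by rewrite /hc map_mx1 trmx1. Qed.

Lemma hc_sum p q I (r : seq I) (P : pred I) (F : I -> 'M[C]_(p, q)) :
  hc (\sum_(i <- r | P i) F i) = \sum_(i <- r | P i) hc (F i).
Proof. by rewrite /hc raddf_sum linear_sum. Qed.

End ConjugateTranspose.

Section InnerProduct.
Variable R : realType.
Local Notation C := R[i].
Variable n : nat.
Implicit Types (u v w : 'cV[C]_n) (M : 'M[C]_n).

Lemma ip_conj u v : conjc (ip u v) = ip v u.
Proof. by rewrite /ip -[u in RHS]hcK -hcM !mxE. Qed.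

Lemma ipDl u v w : ip (u + v) w = ip u w + ip v w.
Proof. by rewrite /ip hcD mulmxDl mxE. Qed.

Lemma ipDr u v w : ip w (u + v) = ip w u + ip w v.
Proof. by rewrite /ip mulmxDr mxE. Qed.

Lemma ipBr u v w : ip w (u - v) = ip w u - ip w v.
Proof. by rewrite /ip mulmxBr !mxE. Qed.

Lemma ipZl (c : C) u w : ip (c *: u) w = conjc c * ip u w.
Proof. by rewrite /ip hcZ -scalemxAl mxE. Qed.

Lemma ipZr (c : C) u w : ip w (c *: u) = c * ip w u.
Proof. by rewrite /ip -scalemxAr mxE. Qed.

Lemma ip0r u : ip u 0 = 0.
Proof. by rewrite /ip mulmx0 mxE. Qed.

Lemma ip0l u : ip 0 u = 0.
Proof. by rewrite -ip_conj ip0r rmorph0. Qed.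

Lemma ip_mull k (N : 'M[C]_(n, k)) (u : 'cV[C]_k) v : ip (N *m u) v = ip u (hc N *m v).
Proof. by rewrite /ip hcM mulmxA. Qed.

Lemma outer_mulmx u v w : u *m hc v *m w = ip v w *: u.
Proof. by rewrite -mulmxA [hc v *m w]mx11_scalar mul_mx_scalar. Qed.

Lemma ip_mulr k (N : 'M[C]_(n, k)) (u : 'cV[C]_k) v : ip v (N *m u) = ip (hc N *m v) u.
Proof. by rewrite /ip hcM hcK mulmxA. Qed.

Lemma qfE M v : qf M v = ip v (M *m v).
Proof. by rewrite /qf /ip mulmxA. Qed.

Lemma qf_conj M v : hc M = M -> conjc (qf M v) = qf M v.
Proof. by move=> hM; rewrite qfE ip_conj -[in RHS](hcK v) ip_mull hcK hM -qfE. Qed.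

Lemma ip_self_eq0 v : ip v v = 0 -> v = 0.
Proof.
rewrite /ip mxE => /eqP.
under eq_bigr do rewrite !mxE mulrC -sqr_normc.
rewrite psumr_eq0 => [/allP v0|i _]; last by rewrite exprn_ge0.
apply/matrixP => i j; rewrite (ord1 j) mxE.
by have /implyP/(_ isT) := v0 i (mem_index_enum i); rewrite sqrf_eq0 normr_eq0 => /eqP.
Qed.

End InnerProduct.

Section RealPart.
Variable R : realType.
Local Notation C := R[i].
Local Notation Re := (@complex.Re R).

Lemma ReD (z w : C) : Re (z + w) = Re z + Re w.
Proof. by case: z; case: w. Qed.

Lemma Re_realM (r : R) (z : C) : Re (r%:C * z) = r * Re z.
Proof. by case: z => a b /=; rewrite mul0r subr0. Qed.

Lemma Re_sum I (s : seq I) (P : pred I) (f : I -> C) :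
  Re (\sum_(i <- s | P i) f i) = \sum_(i <- s | P i) Re (f i).
Proof. by elim/big_rec2: _ => // i x y _ <-; rewrite ReD. Qed.

Lemma conjcN (z : C) : conjc (- z) = - conjc z.
Proof. exact: rmorphN. Qed.

Lemma conjcM (z w : C) : conjc (z * w) = conjc z * conjc w.
Proof. exact: rmorphM. Qed.

Lemma Re_conj (z : C) : Re (conjc z) = Re z.
Proof. by case: z. Qed.

Lemma Re_mul_eq0 (w : C) : (forall z, Re (z * w) = 0) -> w = 0.
Proof.
case: w => a b Re0; have /= := Re0 1; have /= := Re0 'i.
by rewrite !mul0r !mul1r sub0r subr0 => /eqP; rewrite oppr_eq0 => /eqP -> ->.
Qed.

End RealPart.

Section QuadraticFormOnLine.
Variable R : realType.
Local Notation C := R[i].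
Local Notation Re := (@complex.Re R).
Variables (n : nat) (M : 'M[C]_n) (y w : 'cV[C]_n).
Local Notation B u v := (Re (ip u (M *m v))).

Definition qf_line_poly : {poly R} := (B y y)%:P + (B y w + B w y) *: 'X + B w w *: 'X^2.

Lemma horner_qf_line_poly (t : R) : qf_line_poly.[t] = Re (qf M (y + t%:C *: w)).
Proof.
rewrite qfE mulmxDr -scalemxAr !ipDl !ipDr !ipZl !ipZr conjc_real !ReD !Re_realM.
by rewrite /qf_line_poly !hornerE /=; ring.
Qed.

Lemma qf_line_poly_deriv0 : hc M = M -> qf_line_poly^`().[0] = B y w *+ 2.
Proof.
move=> hM; rewrite /qf_line_poly !derivD derivC !derivZ derivX derivXn !hornerE /=.
by rewrite -[ip w _]ip_conj Re_conj ip_mull hM mulr2n.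
Qed.

End QuadraticFormOnLine.

(* The hypothesis [f'(0) = 0] kills every term in which [f] is differentiated. *)
Lemma deriv0_sum_pow_horner (R : realType) (m : nat) (f : R -> R)
    (c : 'I_m.+1 -> {poly R}) :
  is_derive (0 : R) (1 : R) f 0 ->
  (forall t, \sum_(k < m.+1) f t ^+ (m - k) * (c k).[t] = 0) ->
  \sum_(k < m.+1) f 0 ^+ (m - k) * (c k)^`().[0] = 0.
Proof.
move=> f'0 sum0.
have := @is_derive_sum R R R m.+1 (fun k => f ^+ (m - k) * horner (c k)) 0 1 _
  (fun k => is_deriveM (is_deriveX (m - k) f'0) (is_derive_poly (c k) 0)).
have -> : \sum_(k < m.+1) (f ^+ (m - k) * horner (c k)) = cst 0.
  rewrite fct_sumE; apply/funext => t /=; rewrite /cst -[RHS](sum0 t).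
  by apply: eq_bigr => k _; rewrite exprfctE.
move=> sum'; have := @derive_val _ _ _ _ _ _ _ sum'.
rewrite derive_cst => /esym sum'0; rewrite -[RHS]sum'0.
by apply: eq_bigr => k _; rewrite !scaler0 addr0 exprfctE.
Qed.

Section Pencil.
Variable R : realType.
Local Notation C := R[i].
Local Notation Re := (@complex.Re R).
Variables (n m : nat) (A : 'I_m.+1 -> 'M[C]_n).

Lemma Fpoly_sub a b : Fpoly A a - Fpoly A b = (a - b)%:C *: Phi A a b.
Proof.
rewrite /Phi; case: eqP => [->|/eqP ne]; first by rewrite !subrr scale0r.
by rewrite scalerA -rmorphM divff ?subr_eq0 // scale1r.
Qed.

Lemma ip_Fpoly l u v :
  ip u (Fpoly A l *m v) = \sum_(k < m.+1) (l ^+ (m - k))%:C * ip u (A k *m v).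
Proof.
rewrite /ip mulmx_suml mulmx_sumr summxE; apply: eq_bigr => k _.
by rewrite -scalemxAl -scalemxAr mxE.
Qed.

Hypothesis hA : forall j, hc (A j) = A j.

Lemma hc_Fpoly l : hc (Fpoly A l) = Fpoly A l.
Proof. by rewrite /Fpoly hc_sum; apply: eq_bigr => k _; rewrite hcZ conjc_real hA. Qed.

Lemma hc_dFpoly l : hc (dFpoly A l) = dFpoly A l.
Proof. by rewrite /dFpoly hc_sum; apply: eq_bigr => k _; rewrite hcZ conjc_real hA. Qed.

Lemma hc_Phi a b : hc (Phi A a b) = Phi A a b.
Proof. by rewrite /Phi; case: eqP => _; rewrite ?hc_dFpoly // hcZ conjc_real hcB !hc_Fpoly. Qed.

Lemma stationary_root_line_orth (f : R -> R) (y w : 'cV[C]_n) :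
  is_derive (0 : R) (1 : R) f 0 ->
  (forall t, qf (Fpoly A (f t)) (y + t%:C *: w) = 0) ->
  Re (ip (Fpoly A (f 0) *m y) w) = 0.
Proof.
move=> f'0 root.
have sum0 t : \sum_(k < m.+1) f t ^+ (m - k) * (qf_line_poly (A k) y w).[t] = 0.
  transitivity (Re (qf (Fpoly A (f t)) (y + t%:C *: w))); last by rewrite root.
  rewrite qfE ip_Fpoly Re_sum.
  by apply: eq_bigr => k _; rewrite horner_qf_line_poly qfE Re_realM.
have := deriv0_sum_pow_horner f'0 sum0.
under eq_bigr do rewrite qf_line_poly_deriv0 // mulrnAr.
rewrite sumrMnl => /eqP; rewrite mulrn_eq0 /= => /eqP dsum0.
rewrite ip_mull hc_Fpoly ip_Fpoly Re_sum -[RHS]dsum0.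
by apply: eq_bigr => k _; rewrite Re_realM.
Qed.

End Pencil.

Section Projector.
Variable R : realType.
Local Notation C := R[i].
Variables (n m : nat) (A : 'I_m.+1 -> 'M[C]_n).
Hypothesis hA : forall j, hc (A j) = A j.
Variables (x : 'cV[C]_n) (mu rx : R).
Implicit Types u v : 'cV[C]_n.

Local Notation Phm := (Phi A mu rx).
Local Notation Ph := (qf (Phi A mu rx) x).
Local Notation Q := (1%:M - Proj A x mu rx).
Local Notation F := (Fpoly A mu).
Local Notation Fc := (Fcheck A mu rx mu x).

Lemma Proj_mulmx v : Proj A x mu rx *m v = (Ph^-1 * ip x (Phm *m v)) *: x.
Proof. by rewrite /Proj -scalemxAl -mulmxA outer_mulmx scalerA. Qed.

Lemma hc_Proj_mulmx v : hc (Proj A x mu rx) *m v = (Ph^-1 * ip x v) *: (Phm *m x).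
Proof.
rewrite /Proj hcZ !hcM hcK hc_Phi // conjc_inv qf_conj ?hc_Phi //.
by rewrite -scalemxAl -mulmxA outer_mulmx -scalemxAr scalerA.
Qed.

Lemma hc_compl_Proj_id v : ip x v = 0 -> hc Q *m v = v.
Proof. by move=> xv0; rewrite hcB hc1 mulmxBl mul1mx hc_Proj_mulmx xv0 mulr0 scale0r subr0. Qed.

Lemma Fcheck_mulmx u : Fc *m u = hc Q *m (F *m (Q *m u)).
Proof. by rewrite /Fcheck hcB hc1 -!mulmxA. Qed.

Lemma hc_Fcheck : hc Fc = Fc.
Proof. by rewrite /Fcheck !hcM hc_Fpoly // !hcB hc1 hcK mulmxA. Qed.

Lemma ip_Fcheck u v : ip u (Fc *m v) = ip (Fc *m u) v.
Proof. by rewrite ip_mull hc_Fcheck. Qed.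

Lemma qf_Fcheck u : qf Fc u = qf F (Q *m u).
Proof. by rewrite !qfE Fcheck_mulmx -ip_mull. Qed.

Lemma qf_Fpoly_root : qf (Fpoly A rx) x = 0 -> qf F x = (mu - rx)%:C * Ph.
Proof. by move=> x0; rewrite -[LHS]subr0 -x0 !qfE -ipBr -mulmxBl Fpoly_sub -scalemxAl ipZr. Qed.

Hypothesis Ph0 : Ph != 0.

Lemma compl_Proj_x : Q *m x = 0.
Proof. by rewrite mulmxBl mul1mx Proj_mulmx -qfE mulVf // scale1r subrr. Qed.

Lemma compl_Proj_idem v : Q *m (Q *m v) = Q *m v.
Proof.
have Qv : Q *m v = v - (Ph^-1 * ip x (Phm *m v)) *: x by rewrite mulmxBl mul1mx Proj_mulmx.
by rewrite [in LHS]Qv mulmxBr -scalemxAr compl_Proj_x scaler0 subr0.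
Qed.

Lemma Fcheck_compl_Proj u : Fc *m (Q *m u) = Fc *m u.
Proof. by rewrite !Fcheck_mulmx compl_Proj_idem. Qed.

Lemma ip_x_Fcheck u : ip x (Fc *m u) = 0.
Proof. by rewrite Fcheck_mulmx -ip_mull compl_Proj_x ip0l. Qed.

Lemma ip_compl_Proj_Fcheck u v : ip (Q *m u) (Fc *m v) = ip u (Fc *m v).
Proof. by rewrite ip_Fcheck Fcheck_compl_Proj -ip_Fcheck. Qed.

Variable d : 'cV[C]_n.
Hypotheses (x0 : qf (Fpoly A rx) x = 0) (Qd : Q *m d = d).
Hypotheses (xr : ip x (F *m (x + d)) = 0) (dr : ip d (F *m (x + d)) = 0).

Lemma ip_x_Fpoly : ip x (F *m d) = - ((mu - rx)%:C * Ph).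
Proof. by apply/eqP; rewrite -addr_eq0 -qf_Fpoly_root // qfE addrC -ipDr -mulmxDr xr. Qed.

Lemma Fpoly_sub_resid : F *m (x + d) - Fpoly A rx *m x = Fc *m d.
Proof.
rewrite Fcheck_mulmx Qd hcB hc1 mulmxBl mul1mx hc_Proj_mulmx ip_x_Fpoly.
rewrite mulrN mulrCA mulVf // mulr1 scaleNr opprK scalemxAl -Fpoly_sub.
by rewrite mulmxDr mulmxBl addrA [F *m d + _]addrC.
Qed.

Lemma qf_Fpoly_d : qf F d = (mu - rx)%:C * Ph.
Proof.
have dx : ip d (F *m x) = - ((mu - rx)%:C * Ph).
  by rewrite -ip_conj ip_mull hc_Fpoly // ip_x_Fpoly conjcN conjcM conjc_real qf_conj ?hc_Phi.
by rewrite -[RHS]opprK -dx; apply/eqP; rewrite -addr_eq0 qfE -ipDr -mulmxDr [d + x]addrC dr.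
Qed.

End Projector.

Lemma rho_root (R : realType) n m (A : 'I_m.+1 -> 'M[R[i]]_n) lm lp (y : 'cV[R[i]]_n) :
  (exists lam, inI lm lp lam /\ qf (Fpoly A lam) y = 0) ->
  qf (Fpoly A (rho A lm lp y)) y = 0.
Proof. by move=> ex; rewrite /rho; case: (epsilon_spec (inhabits 0) _ ex). Qed.

Lemma mulmx_ginv_ker (K : pzRingType) k (M X : 'M[K]_k) (v : 'cV[K]_k) :
  M *m X *m M = M -> M *m (v - X *m (M *m v)) = 0.
Proof. by move=> MXM; rewrite mulmxBr !mulmxA MXM subrr. Qed.

Section StationaryPoint.
Variable R : realType.
Local Notation C := R[i].
Local Notation Re := (@complex.Re R).
Variables (n m k : nat) (A : 'I_m.+1 -> 'M[C]_n) (lm : R) (lp : \bar R).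
Variables (x p : 'cV[C]_n) (S : 'M[C]_(n, k)) (alpha : C) (b : 'cV[C]_k) (mu : R).
Hypothesis hA : forall j, hc (A j) = A j.

Local Notation rx := (rho A lm lp x).
Local Notation Q := (1%:M - Proj A x mu rx).
Local Notation g := (fun a c => x + a *: (Q *m (p + S *m c))).
Local Notation s := (p + S *m b).
Local Notation d := (alpha *: (Q *m s)).
Local Notation r := (resid A lm lp x).
Local Notation ropt := (resid A lm lp (x + d)).
Local Notation F := (Fpoly A mu).
Local Notation Fc := (Fcheck A mu rx mu x).
Local Notation Ph := (qf (Phi A mu rx) x).

Hypothesis p_r : ip p r != 0.
Hypothesis S_r : hc S *m r = 0.
Hypothesis g_root : forall a c, exists lam, inI lm lp lam /\ qf (Fpoly A lam) (g a c) = 0.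
Hypothesis mu_opt : mu = rho A lm lp (x + d).
Hypothesis stat : stationary (fun a c => rho A lm lp (g a c)) alpha b.

Lemma qf_root_x : qf (Fpoly A rx) x = 0.
Proof. by have := rho_root (g_root 0 0); rewrite scale0r addr0. Qed.

Lemma ropt_E : ropt = F *m (x + d).
Proof. by rewrite /resid -mu_opt. Qed.

Lemma stationary_Re_ip da db w :
  (forall t : R, g (alpha + t%:C * da) (b + t%:C *: db) = x + d + t%:C *: w) ->
  Re (ip ropt w) = 0.
Proof.
move=> line; have := stationary_root_line_orth hA (stat da db).
by rewrite mul0r addr0 scale0r addr0; apply=> t; rewrite -line; apply: rho_root.
Qed.

Lemma ip_Qs_ropt : ip (Q *m s) ropt = 0.
Proof.
rewrite -ip_conj; apply/eqP; rewrite conjc_eq0; apply/eqP/Re_mul_eq0 => z.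
rewrite -ipZr; apply: (stationary_Re_ip (db := 0)) => t.
by rewrite /= scaler0 addr0 scalerDl addrA scalerA.
Qed.

Lemma ip_d_ropt : ip d ropt = 0.
Proof. by rewrite ipZl ip_Qs_ropt mulr0. Qed.

Lemma ip_x_ropt : ip x ropt = 0.
Proof.
by have := rho_root (g_root alpha b); rewrite -mu_opt qfE -ropt_E ipDl ip_d_ropt addr0.
Qed.

Lemma hc_compl_Proj_ropt : hc Q *m ropt = ropt.
Proof. exact/hc_compl_Proj_id/ip_x_ropt. Qed.

Lemma ip_s_ropt : ip s ropt = 0.
Proof. by rewrite -hc_compl_Proj_ropt -ip_mull ip_Qs_ropt. Qed.

Lemma ip_x_r : ip x r = 0.
Proof. by rewrite /resid -qfE qf_root_x. Qed.

Lemma ip_s_r : ip s r = ip p r.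
Proof. by rewrite ipDl ip_mull S_r ip0r addr0. Qed.

(* [s] is orthogonal to [r(x_opt)] but not to [r(x)]: the case [x_opt = x] is vacuous. *)
Lemma xopt_neq_x : x + d != x.
Proof. by apply/eqP => dx; move: p_r; rewrite -ip_s_r -[in resid _ _ _ x]dx ip_s_ropt eqxx. Qed.

Lemma alpha_neq0 : alpha != 0.
Proof. by apply: contra xopt_neq_x => /eqP ->; rewrite scale0r addr0. Qed.

Lemma hc_S_ropt : hc S *m ropt = 0.
Proof.
have QS_ropt w : ip ropt (Q *m (S *m w)) = 0.
  have /eqP : alpha * ip ropt (Q *m (S *m w)) = 0.
    apply: Re_mul_eq0 => z; rewrite mulrCA -!ipZr.
    apply: (stationary_Re_ip (da := 0) (db := z *: w)) => t.
    rewrite /= mulr0 addr0 [S *m (b + _)]mulmxDr addrA mulmxDr scalerDr addrA.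
    by rewrite -!scalemxAr !scalerA mulrA [alpha * _]mulrC.
  by rewrite mulf_eq0 (negbTE alpha_neq0) => /eqP.
apply: ip_self_eq0; have /(congr1 conjc) := QS_ropt (hc S *m ropt).
by rewrite ip_conj conjc0 ip_mull hc_compl_Proj_ropt ip_mull.
Qed.

Lemma orth_span_compl_Proj w :
  ip x w = 0 -> hc S *m w = 0 -> ip s w = 0 -> orth_span x p S s d w.
Proof.
move=> xw Sw sw; split => //.
- by move: sw; rewrite ipDl ip_mull Sw ip0r addr0.
- by rewrite ipZl ip_mull hc_compl_Proj_id // sw mulr0.
Qed.

Lemma orth_span_ropt : orth_span x p S s d ropt.
Proof. exact: orth_span_compl_Proj ip_x_ropt hc_S_ropt ip_s_ropt. Qed.

Hypothesis Ph0 : Ph != 0.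

Lemma compl_Proj_d : Q *m d = d.
Proof. by rewrite -scalemxAr compl_Proj_idem. Qed.

Lemma ropt_sub_r : ropt - r = Fc *m d.
Proof.
rewrite ropt_E; apply: (Fpoly_sub_resid hA Ph0 qf_root_x compl_Proj_d).
by rewrite -ropt_E ip_x_ropt.
Qed.

Lemma qf_d_rho_sub : qf F d = (mu - rx)%:C * Ph.
Proof.
apply: (qf_Fpoly_d hA qf_root_x); rewrite -ropt_E; [exact: ip_x_ropt | exact: ip_d_ropt].
Qed.

Lemma alpha_qf_Fcheck : alpha * qf Fc s = - ip p r.
Proof.
transitivity (ip (Q *m s) (ropt - r)).
  by rewrite ropt_sub_r ip_compl_Proj_Fcheck // -scalemxAr ipZr Fcheck_compl_Proj // qfE.
by rewrite ipBr ip_Qs_ropt sub0r ip_mull hc_compl_Proj_id ?ip_x_r // ip_s_r.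
Qed.

Lemma qf_d_alpha : qf F d = alpha * - ip r p.
Proof.
have qfd : qf F d = conjc alpha * - ip p r.
  by rewrite qfE -scalemxAr ipZl ipZr -qfE -qf_Fcheck alpha_qf_Fcheck.
by rewrite -[LHS]qf_conj ?hc_Fpoly // qfd conjcM conjcK conjcN ip_conj.
Qed.

Lemma S_Fcheck_s : hc S *m (Fc *m s) = 0.
Proof.
have : hc S *m (Fc *m d) = 0 by rewrite -ropt_sub_r mulmxBr hc_S_ropt S_r subrr.
rewrite -scalemxAr Fcheck_compl_Proj // -scalemxAr => /eqP.
by rewrite scaler_eq0 (negbTE alpha_neq0) => /eqP.
Qed.

Lemma b_decomp (X : 'M[C]_k) : MPinverse (hc S *m Fc *m S) X ->
  exists v, b = - (X *m hc S *m Fc *m p) + v /\ orth_span x p S s d (Fc *m S *m v).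
Proof.
case=> MXM _ _ _.
have Mb : hc S *m Fc *m S *m b = - (hc S *m Fc *m p).
  by apply/eqP; rewrite -addr_eq0 addrC; move: S_Fcheck_s; rewrite !mulmxDr !mulmxA => ->.
exists (b - X *m (hc S *m Fc *m S *m b)); split.
  by rewrite Mb mulmxN opprK !mulmxA addrC addrK.
apply: orth_span_compl_Proj.
- by rewrite -mulmxA ip_x_Fcheck.
- by rewrite (mulmxA (hc S) (Fc *m S)) (mulmxA (hc S) Fc) mulmx_ginv_ker.
- by rewrite -mulmxA ip_Fcheck // ip_mulr S_Fcheck_s ip0l.
Qed.

Hypothesis qs0 : qf Fc s != 0.

Lemma alpha_eq_ip : alpha = - ip p r / qf Fc s.
Proof. by rewrite -alpha_qf_Fcheck mulfK. Qed.

Lemma alpha_eq_qf : alpha = - qf F d / ip r p.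
Proof. by rewrite qf_d_alpha mulrN opprK mulfK // -ip_conj conjc_eq0. Qed.

Lemma rho_sub_eq_qf : (mu - rx)%:C = qf F d / Ph.
Proof. by rewrite qf_d_rho_sub mulfK. Qed.

Lemma rho_sub_eq_ip : (mu - rx)%:C = `|ip r p| ^+ 2 / (Ph * qf Fc s).
Proof.
rewrite rho_sub_eq_qf qf_d_alpha sqr_normc ip_conj {1}alpha_eq_ip.
by field; rewrite qs0 Ph0.
Qed.

End StationaryPoint.

Unset Implicit Arguments.

Theorem theorem2p2 (R : realType) (n m k : nat)
  (A : 'I_m.+1 -> 'M[R[i]]_n) (lm : R) (lp : \bar R)
  (x p : 'cV[R[i]]_n) (S : 'M[R[i]]_(n, k))
  (alpha : R[i]) (b : 'cV[R[i]]_k) (mu : R) :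
  (* standing assumptions *)
  (forall j, hc (A j) = A j) ->
  (lm%:E < lp)%E ->
  (forall y : 'cV[R[i]]_n, y != 0 -> qf (Fpoly A lm) y < 0) ->
  (forall (y : 'cV[R[i]]_n) (lam : R), y != 0 -> inI lm lp lam ->
     qf (Fpoly A lam) y = 0 -> 0 < qf (dFpoly A lam) y) ->
  (* hypotheses of the theorem *)
  x != 0 -> resid A lm lp x != 0 -> p != 0 ->
  ip p (resid A lm lp x) != 0 ->
  hc S *m resid A lm lp x = 0 ->
  \rank (row_mx (row_mx x p) S) = (1 + 1 + k)%N ->
  let rx := rho A lm lp x in
  let P := Proj A x mu rx in
  let g := fun (a : R[i]) (c : 'cV[R[i]]_k) =>
             x + a *: ((1%:M - P) *m (p + S *m c)) in
  (* rho is evaluated only at vectors having a root in I *)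
  (forall a c, exists lam, inI lm lp lam /\ qf (Fpoly A lam) (g a c) = 0) ->
  let s := p + S *m b in
  let d := alpha *: ((1%:M - P) *m s) in
  let xopt := x + d in
  (* self-consistency: the projector uses rho(x_opt) *)
  mu = rho A lm lp xopt ->
  stationary (fun a c => rho A lm lp (g a c)) alpha b ->
  let r := resid A lm lp x in
  let ropt := resid A lm lp xopt in
  let Fc := Fcheck A mu rx mu x in
  let Ph := qf (Phi A mu rx) x in
  let formulas :=
    [/\ alpha = - ip p r / qf Fc s /\ alpha = - qf (Fpoly A mu) d / ip r p,
        (mu - rx)%:C = `|ip r p| ^+ 2 / (Ph * qf Fc s)
          /\ (mu - rx)%:C = qf (Fpoly A mu) d / Ph,
        ropt - r = Fc *m d &
        forall X : 'M[R[i]]_k, MPinverse (hc S *m Fc *m S) X ->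
          exists v : 'cV[R[i]]_k,
            b = - (X *m hc S *m Fc *m p) + v /\ orth_span x p S s d (Fc *m S *m v)] in
  (xopt != x -> Ph != 0 -> qf Fc s != 0 ->
     [/\ alpha != 0, orth_span x p S s d ropt & formulas])
  /\ (xopt = x -> formulas).
Proof.
move=> hA _ _ _ _ _ _ p_r S_r _ rx P g g_root s d xopt mu_opt stat r ropt Fc Ph formulas.
have formulasP : Ph != 0 -> qf Fc s != 0 -> formulas.
  move=> Ph0 qs0; split.
  - by split; [exact: alpha_eq_ip | exact: alpha_eq_qf].
  - by split; [exact: (rho_sub_eq_ip (alpha := alpha)) | exact: rho_sub_eq_qf].
  - exact: (ropt_sub_r hA g_root mu_opt stat Ph0).
  - exact: b_decomp.
split=> [_ Ph0 qs0 | /eqP]; last by rewrite (negbTE (xopt_neq_x hA p_r S_r g_root mu_opt stat)).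
split; last exact: formulasP.
- exact: (alpha_neq0 hA p_r S_r g_root mu_opt stat).
- exact: (orth_span_ropt hA p_r S_r g_root mu_opt stat).
Qed.
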